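(* Let $G$ be a twin-free graph with $G\ne K_1$ and $G\ne K_2$. Then for every $t\ge1$, $\det(\mu_t(G))=\det(G)$ if $G$ has no isolated vertex, and $\det(\mu_t(G))=\det(G)+t-1$ otherwise.
   Context: All graphs are finite and simple. For a graph $G$ with $V(G)=\{v_1,\dots,v_n\}$ and an integer $t\ge1$, the generalized Mycielskian $\mu_t(G)$ has vertex set $\{u_i^s: 1\le i\le n,\ 0\le s\le t\}\cup\{w\}$, where $u_i^0$ is identified with $v_i$. Its edges are: $u_i^0u_j^0$ for each edge $v_iv_j$ of $G$; $u_i^su_j^{s+1}$ and $u_j^su_i^{s+1}$ for each edge $v_iv_j$ of $G$ and each $0\le s<t$; and $u_i^tw$ for all $1\le i\le n$. A set $S\subseteq V(G)$ is a determining set for $G$ if the only automorphism of $G$ fixing every vertex of $S$ is the identity; $\det(G)$ is the minimum size of a determining set. Two vertices are twins if they have the same open neighborhood; $G$ is twin-free if it has no pair of distinct twin vertices. *)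

From mathcomp Require Import all_boot all_fingroup.
Set Implicit Arguments. Unset Strict Implicit. Unset Printing Implicit Defensive.

(* A simple graph on a finite vertex type T is a symmetric irreflexive e : rel T. *)

Definition is_aut (T : finType) (e : rel T) (g : {perm T}) : bool :=
  [forall x, forall y, e (g x) (g y) == e x y].

Definition determining (T : finType) (e : rel T) (S : {set T}) : bool :=
  [forall g : {perm T}, is_aut e g ==> [forall x in S, g x == x] ==> (g == 1%g)].

(* det(G): minimum size of a determining set ([set: T] is always determining). *)
Definition det_num (T : finType) (e : rel T) : nat :=
  #|[arg min_(S < [set: T] | determining e S) #|S|]|.

Definition twin_free (T : finType) (e : rel T) : Prop :=
  forall x y, (forall z, e x z = e y z) -> x = y.

Definition has_isolated (T : finType) (e : rel T) : bool :=
  [exists x, [forall y, ~~ e x y]].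

(* Generalized Mycielskian mu_t(G): vertices None = w, Some (s, v) = u_v^s
   with s in {0..t}.  *)
Definition myc_rel (T : finType) (e : rel T) (t : nat) :
  rel (option ('I_t.+1 * T)) :=
  fun x y =>
    match x, y with
    | Some (s, v), Some (s', v') =>
        e v v' && [|| ((s : nat) == 0) && ((s' : nat) == 0),
                      (s : nat).+1 == s' | (s' : nat).+1 == s]
    | Some (s, _), None => (s : nat) == t
    | None, Some (s, _) => (s : nat) == t
    | None, None => false
    end.
Arguments myc_rel {T} e t _ _.

From mathcomp Require Import all_boot all_fingroup zify.
Set Implicit Arguments. Unset Strict Implicit. Unset Printing Implicit Defensive.

(* The vertices of mu_t(G) are the apex w (None) and the copies u_a^s
   (Some (s, a)) of the vertices a of G at the levels s = 0, ..., t.  Let c be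
   t - 1 if G has an isolated vertex z (unique, by twin-freeness) and 0 else;
   we prove det(G) + c <= det(mu_t(G)) <= det(G) + c.

   Lower bound: automorphisms of G act levelwise on mu_t(G), so the
   non-isolated base vertices of a determining set of mu_t(G) determine G;
   besides, the t copies u_z^s, s < t, are isolated in mu_t(G), and a
   determining set misses at most one vertex of any set of isolated vertices.

   Upper bound: every automorphism fixes w, since w is "shadowed" (an
   automorphism-invariant property) and has degree |G| >= 3, whereas no copy of
   degree >= 3 is shadowed.  An automorphism fixing w preserves the distance to
   w, hence the level of every copy connected to w; the other copies are the
   u_z^s, s < t.  Thus a determining set of G on level 0 together with
   u_z^1, ..., u_z^(t-1) forces an automorphism to fix the u_z^s, then to
   induce an automorphism of G on level 0, hence to fix level 0, and then,
   level by level, by twin-freeness, everything. *)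

Lemma perm_fix_all_but_one (U : finType) (g : {perm U}) (A B : {set U}) :
  (forall x, (g x \in A) = (x \in A)) -> #|A :\: B| <= 1 ->
  {in A :&: B, forall x, g x = x} -> {in A, forall x, g x = x}.
Proof.
move=> gA AB1 gB x xA; case xB: (x \in B); first by apply: gB; rewrite inE xA.
have gxA : g x \in A by rewrite gA.
case gxB: (g x \in B).
  by apply: (@perm_inj _ g); apply: gB; rewrite inE gxA.
by apply: (card_le1_eqP AB1); rewrite inE ?gxA ?xA ?gxB ?xB.
Qed.

Section Automorphisms.
Variables (U : finType) (R : rel U).

Lemma autE (g : {perm U}) : is_aut R g -> forall x y, R (g x) (g y) = R x y.
Proof. by move=> /forallP gR x y; move/forallP: (gR x) => /(_ y) /eqP. Qed.

Lemma autP (g : {perm U}) : (forall x y, R (g x) (g y) = R x y) -> is_aut R g.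
Proof. by move=> gR; apply/forallP=> x; apply/forallP=> y; rewrite gR. Qed.

Lemma detP (S : {set U}) : determining R S <->
  (forall g : {perm U}, is_aut R g -> {in S, forall x, g x = x} -> g = 1%g).
Proof.
split=> [/forallP detS g gR gS | detS].
  move/implyP: (detS g) => /(_ gR) /implyP gS1.
  by apply/eqP; apply: gS1; apply/forall_inP=> x /gS ->.
apply/forallP=> g; apply/implyP=> gR; apply/implyP=> /forall_inP gS.
by apply/eqP; apply: detS => // x /gS /eqP.
Qed.

(* The whole vertex set is determining, so det_num is a genuine minimum. *)
Lemma det_setT : determining R [set: U].
Proof. by apply/detP=> g _ gS; apply/permP=> x; rewrite perm1 gS ?inE. Qed.

Lemma det_le (S : {set U}) : determining R S -> det_num R <= #|S|.
Proof.
move=> detS; rewrite /det_num.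
by case: arg_minnP => [|S0 _ /(_ S detS)]; first exact: det_setT.
Qed.

Lemma det_ex : exists2 S : {set U}, determining R S & #|S| = det_num R.
Proof.
rewrite /det_num; case: arg_minnP => [|S0 det0 _]; first exact: det_setT.
by exists S0.
Qed.

Lemma aut_degree (g : {perm U}) x : is_aut R g ->
  #|[set y | R (g x) y]| = #|[set y | R x y]|.
Proof.
move=> gR; have -> : [set y | R (g x) y] = g @: [set y | R x y].
  apply/setP=> y; rewrite inE; apply/idP/imsetP => [Rxy | [z Rxz ->]].
    by exists (g^-1%g y); rewrite ?permKV // inE -(autE gR) permKV.
  by rewrite (autE gR) -inE.
by rewrite card_imset //; apply: perm_inj.
Qed.

Definition shadowed (x : U) := forall y, R x y ->
  exists y', [/\ ~~ R x y', y' != x & forall z, R y z -> z != x -> R y' z].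

Lemma aut_shadowed (g : {perm U}) x : is_aut R g -> shadowed x -> shadowed (g x).
Proof.
move=> gR shx y Rgxy.
have [y' [nRxy' y'x Ry']] : exists y', [/\ ~~ R x y', y' != x &
    forall z, R (g^-1%g y) z -> z != x -> R y' z].
  by apply: shx; rewrite -(autE gR) permKV.
exists (g y'); split; rewrite ?(autE gR) ?(inj_eq perm_inj) // => z Ryz zgx.
rewrite -(permKV g z) (autE gR); apply: Ry'; first by rewrite -(autE gR) !permKV.
by apply: contra zgx => /eqP <-; rewrite permKV.
Qed.

Fixpoint ball (w : U) (k : nat) : {set U} :=
  if k is k'.+1 then ball w k' :|: [set y | [exists x in ball w k', R x y]]
  else [set w].

Lemma center_in_ball w k : w \in ball w k.
Proof. by elim: k => [|k IHk] /=; rewrite !inE ?IHk. Qed.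

Lemma aut_ball (g : {perm U}) w k y : is_aut R g -> g w = w ->
  (g y \in ball w k) = (y \in ball w k).
Proof.
move=> gR gw; elim: k y => [|k IHk] y /=.
  by rewrite !inE -{1}gw (inj_eq perm_inj).
rewrite !inE IHk; congr (_ || _); apply/existsP/existsP => [] [x /andP [xB Rxy]].
  by exists (g^-1%g x); rewrite -IHk permKV xB -(autE gR) permKV.
by exists (g x); rewrite IHk xB (autE gR).
Qed.

Definition isolated (x : U) := [forall y, ~~ R x y].

Lemma isolatedP x : reflect (forall y, R x y = false) (isolated x).
Proof. by apply: (iffP forallP) => [Rx y | Rx y]; [apply/negbTE | rewrite Rx]. Qed.

Lemma has_isolatedP : reflect (exists x, isolated x) (has_isolated R).
Proof. exact: existsP. Qed.

Hypothesis R_sym : symmetric R.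

Lemma tperm_isolated_aut y1 y2 : isolated y1 -> isolated y2 -> is_aut R (tperm y1 y2).
Proof.
move=> /isolatedP R1 /isolatedP R2.
have Riso z x : z \in [:: y1; y2] -> R z x = false.
  by rewrite !inE => /orP [] /eqP ->.
apply: autP => x y; case: (tpermP y1 y2 x) => [-> | -> | _ _].
- by rewrite !Riso ?inE ?eqxx ?orbT.
- by rewrite !Riso ?inE ?eqxx ?orbT.
case: (tpermP y1 y2 y) => [-> | -> | _ _] //;
  by rewrite R_sym (R_sym x) !Riso ?inE ?eqxx ?orbT.
Qed.

Lemma det_isolated_missing (S A : {set U}) :
  determining R S -> (forall x, x \in A -> isolated x) -> #|A :\: S| <= 1.
Proof.
move=> detS Aiso; apply/card_le1_eqP => y1 y2; rewrite !inE.
move=> /andP [y1S /Aiso iso1] /andP [y2S /Aiso iso2].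
have /permP/(_ y1) : tperm y1 y2 = 1%g.
  apply: (proj1 (detP S) detS _ (tperm_isolated_aut iso1 iso2)) => x xS.
  by apply: tpermD; [move: y1S | move: y2S]; apply: contraNneq => ->.
by rewrite tpermL perm1.
Qed.

Hypothesis R_tf : twin_free R.

(* In a twin-free graph, all isolated vertices are twins, hence there is at
   most one, and every automorphism fixes it. *)
Lemma isolated_uniq x y : isolated x -> isolated y -> x = y.
Proof. by move=> /isolatedP Rx /isolatedP Ry; apply: R_tf => z; rewrite Rx Ry. Qed.

Lemma aut_fix_isolated (g : {perm U}) x : is_aut R g -> isolated x -> g x = x.
Proof.
move=> gR isox; apply: isolated_uniq => //; apply/isolatedP => y.
by rewrite -(permKV g y) (autE gR); apply/isolatedP.
Qed.

Hypothesis R_irr : irreflexive R.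

Lemma twin_free_card2 : #|U| = 2 -> forall x y, x != y -> R x y.
Proof.
move=> U2 x y xy; apply/negPn/negP => nRxy.
have xyT : [set x; y] = [set: U].
  by apply/eqP; rewrite eqEcard subsetT cardsT cards2 xy U2.
move/eqP: xy; apply; apply: R_tf => z; have : z \in [set x; y] by rewrite xyT inE.
rewrite !inE => /orP [] /eqP ->; first by rewrite R_irr R_sym (negbTE nRxy).
by rewrite R_irr (negbTE nRxy).
Qed.

End Automorphisms.

Section Mycielskian.
Variables (T : finType) (e : rel T) (t : nat).
Hypotheses (e_sym : symmetric e) (e_irr : irreflexive e) (e_tf : twin_free e).
Hypothesis t_gt0 : 0 < t.

Local Notation V := (option ('I_t.+1 * T)).
Local Notation E := (myc_rel e t).
Local Notation apex := (@None ('I_t.+1 * T)).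

Definition level_adj (s r : nat) := [|| (s == 0) && (r == 0), s.+1 == r | r.+1 == s].

Lemma myc_copies (s r : 'I_t.+1) a b :
  E (Some (s, a)) (Some (r, b)) = e a b && level_adj s r.
Proof. by []. Qed.

Lemma myc_copy_apex (s : 'I_t.+1) a : E (Some (s, a)) apex = (s == t :> nat).
Proof. by []. Qed.

Lemma myc_apex_copy (s : 'I_t.+1) a : E apex (Some (s, a)) = (s == t :> nat).
Proof. by []. Qed.

Lemma myc_sym : symmetric E.
Proof.
move=> [[s a]|] [[r b]|] //.
by rewrite !myc_copies e_sym /level_adj; congr (_ && _); lia.
Qed.

Definition lvl (n : nat) : 'I_t.+1 := inord n.

Lemma lvlE n : n <= t -> lvl n = n :> nat.
Proof. by move=> n_le; rewrite /lvl inordK. Qed.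

Definition lift_fun (sg : {perm T}) (y : V) : V :=
  if y is Some (s, a) then Some (s, sg a) else apex.

Lemma lift_fun_inj sg : injective (lift_fun sg).
Proof. by move=> [[r a]|] [[r' b]|] //= [-> /perm_inj ->]. Qed.

Definition lift_perm sg : {perm V} := perm (@lift_fun_inj sg).

Lemma lift_aut sg : is_aut e sg -> is_aut E (lift_perm sg).
Proof.
move=> sg_aut; apply: autP => [[[r a]|] [[r' b]|]]; rewrite !permE //=.
by rewrite (autE sg_aut).
Qed.

Definition iso_copies (A : {set 'I_t.+1}) : {set V} :=
  [set y : V | if y is Some (s, v) then (s \in A) && isolated e v else false].

Lemma card_iso_copies A : #|iso_copies A| = if has_isolated e then #|A| else 0.
Proof.
case: has_isolatedP => [[z isoz] | noiso].
  have -> : iso_copies A = (fun s => Some (s, z)) @: A.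
    apply/setP => [[[s v]|]]; rewrite inE; last by apply/esym/imsetP => [[]].
    apply/andP/imsetP => [[sA isov] | [r rA [-> ->]]]; last by rewrite rA isoz.
    by exists s; rewrite // (isolated_uniq e_tf isov isoz).
  by rewrite card_imset // => r r' [].
apply/eqP; rewrite cards_eq0; apply/eqP/setP => [[[s v]|]]; rewrite !inE //.
by apply/negP => /andP [_ isov]; apply: noiso; exists v.
Qed.

Lemma low_iso_isolated y : y \in iso_copies [set~ ord_max] -> isolated E y.
Proof.
rewrite inE; case: y => [[s v]|] // /andP [+ /isolatedP isov]; rewrite !inE => s_top.
apply/isolatedP => [[[r b]|]]; first by rewrite myc_copies isov.
by rewrite myc_copy_apex; apply: contraNF s_top => /eqP s_t; apply/eqP/val_inj.
Qed.

Definition trace (S' : {set V}) : {set T} :=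
  [set v | [exists s, Some (s, v) \in S'] && ~~ isolated e v].

(* If S' is determining for the Mycielskian, its trace is determining for G:
   an automorphism of G fixing the trace lifts to one fixing S'. *)
Lemma trace_determining (S' : {set V}) : determining E S' -> determining e (trace S').
Proof.
move=> detS'; apply/detP => sg sg_aut sg_fix.
have lift_fix : {in S', forall y, lift_perm sg y = y}.
  move=> [[s v]|] yS'; rewrite permE //=.
  case isov: (isolated e v); first by rewrite (aut_fix_isolated e_tf sg_aut isov).
  by rewrite sg_fix // inE isov andbT; apply/existsP; exists s.
have /permP lift1 := proj1 (detP E S') detS' _ (lift_aut sg_aut) lift_fix.
apply/permP => v; rewrite perm1.
by move: (lift1 (Some (ord0, v))); rewrite permE perm1 => -[].
Qed.

(* A vertex of the trace has a copy in S' that is not an isolated copy. *)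
Lemma card_trace (S' : {set V}) : #|trace S'| <= #|S' :\: iso_copies [set~ ord_max]|.
Proof.
rewrite -(card_imset _ (@Some_inj _)); apply: leq_trans (leq_imset_card (omap snd) _).
apply/subset_leq_card/subsetP => _ /imsetP [v + ->].
rewrite inE => /andP [/existsP [s vS'] nisov].
by apply/imsetP; exists (Some (s, v)); rewrite // !inE vS' negb_and nisov orbT.
Qed.

(* Lower bound: a determining set of mu_t(G) has a determining trace in G, and
   misses at most one of the t isolated copies below the top level. *)
Lemma lower_bound (S' : {set V}) : determining E S' ->
  det_num e + (if has_isolated e then t - 1 else 0) <= #|S'|.
Proof.
move=> detS'; set Z := iso_copies [set~ ord_max].
have det_trace : det_num e <= #|S' :\: Z|.
  exact: leq_trans (det_le (trace_determining detS')) (card_trace S').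
have missing : #|Z :\: S'| <= 1.
  exact: (@det_isolated_missing _ E myc_sym S' Z detS' low_iso_isolated).
have cardZ : #|Z| = if has_isolated e then t else 0.
  by rewrite card_iso_copies cardsC1 card_ord.
have := cardsID Z S'; have := cardsID S' Z; rewrite setIC.
by case: (has_isolated e) cardZ; lia.
Qed.

(* The apex w is shadowed: the shadow of its neighbour u_v^t is u_v^(t-2)
   (read u_v^0 when t = 1). *)
Lemma apex_shadowed : shadowed E apex.
Proof.
move=> [[s v]|] //; rewrite myc_apex_copy => /eqP s_t.
exists (Some (lvl t.-2, v)); split => //; first by rewrite myc_apex_copy lvlE; lia.
move=> [[r c]|] //; rewrite !myc_copies => /andP [vc rs] _.
rewrite vc /level_adj lvlE; last lia.
by move: rs; rewrite /level_adj s_t; have := ltn_ord r; lia.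
Qed.

Lemma apex_degree : #|[set y | E apex y]| = #|T|.
Proof.
have -> : [set y | E apex y] = (fun v => Some (ord_max, v)) @: [set: T].
  apply/setP => [[[s v]|]]; rewrite inE; last by apply/esym/imsetP => [[]].
  rewrite myc_apex_copy; apply/eqP/imsetP => [s_t | [v' _ [-> _]] //].
  by exists v => //; congr (Some (_, _)); apply: val_inj.
by rewrite card_imset ?cardsT // => a b [].
Qed.

(* u_a^s is not shadowed when some neighbour u_j^ry of it has two further
   neighbours u_a^rp and u_k^rq whose common neighbours are all adjacent to
   u_a^s: the shadow of u_j^ry would be such a common neighbour. *)
Lemma copy_not_shadowed_at (s : 'I_t.+1) a j k (ry rp rq : nat) :
  e a j -> e j k -> k != a -> ry <= t -> rp <= t -> rq <= t ->
  level_adj s ry -> level_adj ry rp -> level_adj ry rq -> rp != s ->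
  ~~ ((rp == t) && (rq == t)) ->
  (forall r, r <= t -> level_adj r rp -> level_adj r rq -> level_adj s r) ->
  ~ shadowed E (Some (s, a)).
Proof.
move=> aj jk ka ry_le rp_le rq_le s_ry ry_rp ry_rq rp_s not_top common x_shadowed.
have x_y : E (Some (s, a)) (Some (lvl ry, j)) by rewrite myc_copies aj lvlE.
have [y' [x_y' _ y'_nbr]] := x_shadowed _ x_y.
have y'_a : E y' (Some (lvl rp, a)).
  apply: y'_nbr; first by rewrite myc_copies e_sym aj !lvlE.
  by apply/eqP => -[/(congr1 val)]; rewrite /= lvlE //; apply/eqP.
have y'_k : E y' (Some (lvl rq, k)).
  apply: y'_nbr; first by rewrite myc_copies jk !lvlE.
  by apply/eqP => -[_ k_a]; rewrite k_a eqxx in ka.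
clear y'_nbr; case: y' x_y' y'_a y'_k => [[r b]|]; last first.
  rewrite !myc_apex_copy !lvlE // => _ /eqP rp_t /eqP rq_t.
  by rewrite rp_t rq_t !eqxx in not_top.
rewrite !myc_copies !lvlE // => /negP x_y' /andP [b_a r_rp] /andP [_ r_rq]; apply: x_y'.
by rewrite e_sym b_a common //; have := ltn_ord r; lia.
Qed.

Lemma copy_not_shadowed (s : 'I_t.+1) a j k :
  e a j -> e j k -> k != a -> ~ shadowed E (Some (s, a)).
Proof.
move=> aj jk ka; have := ltn_ord s; rewrite ltnS => s_le.
have [s_t | s_t] := eqVneq (s : nat) t.
  by apply: (copy_not_shadowed_at (ry := t.-1) (rp := t.-2) (rq := t) aj jk ka);
    rewrite /level_adj => *; lia.
have [s_low | s_pen] := ltnP s.+1 t.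
  by apply: (copy_not_shadowed_at (ry := s.+1) (rp := s.+2) (rq := s) aj jk ka);
    rewrite /level_adj => *; lia.
have [t_gt1 | t_1] := ltnP 1 t.
  by apply: (copy_not_shadowed_at (ry := t.-2) (rp := t - 3) (rq := s) aj jk ka);
    rewrite /level_adj => *; lia.
by apply: (copy_not_shadowed_at (ry := 0) (rp := 1) (rq := 0) aj jk ka);
  rewrite /level_adj => *; lia.
Qed.

(* Otherwise, by twin-freeness, a has at most one neighbour j, and a copy of a
   has at most two neighbours in the Mycielskian. *)
Lemma copy_degree_le2 (s : 'I_t.+1) a : (forall j k, e a j -> e j k -> k = a) ->
  #|[set y | E (Some (s, a)) y]| <= 2.
Proof.
move=> back.
have nbr_uniq j1 j2 : e a j1 -> e a j2 -> j1 = j2.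
  move=> aj1 aj2; apply: e_tf => z.
  have nbr_z j : e a j -> e j z = (z == a).
    by move=> aj; apply/idP/eqP => [/(back _ _ aj) | ->]; rewrite // e_sym.
  by rewrite (nbr_z _ aj1) (nbr_z _ aj2).
have s_le := ltn_ord s.
case: (pickP (e a)) => [j aj | noj]; last first.
  apply: leq_trans (subset_leq_card (B := [set apex]) _) _; last by rewrite cards1.
  by apply/subsetP => [[[r c]|]]; rewrite !inE // myc_copies noj.
have copy_eq (r : 'I_t.+1) n : r = n :> nat -> Some (r, j) = Some (lvl n, j).
  by move=> r_n; congr (Some (_, _)); apply: val_inj; rewrite /= lvlE -r_n // -ltnS.
pose nbrs := if s == t :> nat then [set Some (lvl t.-1, j); apex]
             else [set Some (lvl s.-1, j); Some (lvl s.+1, j)].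
apply: leq_trans (subset_leq_card (B := nbrs) _) _; last first.
  by rewrite /nbrs; case: ifP => _; rewrite cards2; case: (_ != _).
apply/subsetP => [[[r c]|]]; rewrite inE /nbrs; last first.
  by rewrite myc_copy_apex => ->; rewrite !inE eqxx orbT.
rewrite myc_copies => /andP [ac sr]; rewrite (nbr_uniq _ _ ac aj).
have := ltn_ord r; case: ifP => /eqP s_t r_le; rewrite !inE.
  by rewrite (copy_eq r t.-1) ?eqxx //; move: sr; rewrite /level_adj; lia.
have [r_s | r_s] := eqVneq (r : nat) s.-1; first by rewrite (copy_eq r _ r_s) eqxx.
by rewrite (copy_eq r s.+1) ?eqxx ?orbT //; move: sr; rewrite /level_adj; lia.
Qed.

(* As soon as G has at least three vertices, every automorphism of the
   Mycielskian fixes the apex: it is shadowed and has degree #|T| >= 3,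
   whereas no copy is both. *)
Lemma aut_fix_apex (g : {perm V}) : is_aut E g -> 2 < #|T| -> g apex = apex.
Proof.
move=> g_aut T_gt2; case g_apex: (g apex) => [[s a]|] //; exfalso.
have := aut_shadowed g_aut apex_shadowed; rewrite g_apex.
have := aut_degree apex g_aut; rewrite apex_degree g_apex => deg.
case: (boolP [exists j, exists k, e a j && e j k && (k != a)]).
  move=> /existsP [j /existsP [k /andP [/andP [aj jk] ka]]].
  exact: copy_not_shadowed aj jk ka.
move=> no_path _; suff : #|[set y | E (Some (s, a)) y]| <= 2 by rewrite deg; lia.
apply: copy_degree_le2 => j k aj jk; apply/eqP; apply: contraNT no_path => ka.
by apply/existsP; exists j; apply/existsP; exists k; rewrite aj jk ka.
Qed.

(* Since G is twin-free and neither K_1 nor K_2, either G is empty or it has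
   at least three vertices; in both cases automorphisms fix the apex. *)
Lemma myc_aut_fix_apex :
  #|T| <> 1 -> ~ (#|T| = 2 /\ (forall x y : T, x != y -> e x y)) ->
  forall g : {perm V}, is_aut E g -> g apex = apex.
Proof.
move=> T_ne1 not_K2 g g_aut; have [T0 | T_gt0] := posnP #|T|.
  by case: (g apex) => [[s a]|] //; have /(_ T0) := fintype0 a.
apply: aut_fix_apex g_aut _.
have T_ne2 : #|T| <> 2 by move=> T2; apply: not_K2; split => //; exact: twin_free_card2.
lia.
Qed.

(* u_a^s is connected to the apex iff s = t or a is not isolated in G; its
   distance to the apex is then t + 1 - s. *)
Definition reachable (s : nat) (a : T) := (s == t) || ~~ isolated e a.

Lemma not_isolatedP a : reflect (exists j, e a j) (~~ isolated e a).
Proof.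
apply: (iffP idP) => [/forallPn [j] | [j aj]]; first by rewrite negbK; exists j.
by apply/negP => /isolatedP a_iso; rewrite a_iso in aj.
Qed.

Lemma ball_copy_inv k (s : 'I_t.+1) a :
  Some (s, a) \in ball E apex k -> reachable s a && (t.+1 <= k + s).
Proof.
elim: k s a => [|k IHk] s a /=; first by rewrite inE.
rewrite !inE => /orP [/IHk /andP [-> s_k] | /existsP [[[r b]|] /andP [y_k]]].
- by rewrite /=; lia.
- move/IHk: y_k => /andP [_ r_k]; rewrite myc_copies => /andP [ba rs].
  apply/andP; split; last by move: rs; rewrite /level_adj; lia.
  by apply/orP; right; apply/not_isolatedP; exists b; rewrite e_sym.
- by rewrite myc_apex_copy => /eqP s_t; rewrite /reachable s_t eqxx /=; lia.
Qed.

Lemma ball_copy_rev k (s : 'I_t.+1) a :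
  reachable s a -> t.+1 <= k + s -> Some (s, a) \in ball E apex k.
Proof.
elim: k s a => [|k IHk] s a reach s_k; first by have := ltn_ord s; lia.
rewrite /= !inE; apply/orP; right; apply/existsP.
have [s_t | s_t] := eqVneq (s : nat) t.
  by exists apex; rewrite center_in_ball myc_apex_copy s_t eqxx.
move: reach; rewrite /reachable (negbTE s_t) => /not_isolatedP [j aj].
have s_lt : s < t by have := ltn_ord s; lia.
exists (Some (lvl s.+1, j)); apply/andP; split.
  apply: IHk; last by rewrite lvlE //; lia.
  by apply/orP; right; apply/not_isolatedP; exists a; rewrite e_sym.
by rewrite myc_copies e_sym aj /level_adj lvlE //= eqxx orbT.
Qed.

Lemma ball_copy k (s : 'I_t.+1) a :
  (Some (s, a) \in ball E apex k) = reachable s a && (t.+1 <= k + s).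
Proof.
apply/idP/idP => [|/andP [reach s_k]]; first exact: ball_copy_inv.
exact: ball_copy_rev.
Qed.

Lemma ball_low_iso y :
  (y \in ball E apex t.+1) = (y \notin iso_copies [set~ ord_max]).
Proof.
case: y => [[s a]|]; last by rewrite center_in_ball inE.
rewrite ball_copy leq_addr andbT !inE negb_and negbK /reachable.
by congr (_ || _); apply/eqP/eqP => [s_t | -> //]; apply: val_inj.
Qed.

Section ApexFixingAutomorphism.
Variable g : {perm V}.
Hypotheses (g_aut : is_aut E g) (g_apex : g apex = apex).

(* Distance to the apex is preserved, hence so is the level of a copy. *)
Lemma aut_keeps_level (s : 'I_t.+1) a :
  reachable s a -> exists b, g (Some (s, a)) = Some (s, b).
Proof.
move=> reach.
have in_ball k : (g (Some (s, a)) \in ball E apex k) = (t.+1 <= k + s).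
  by rewrite aut_ball // ball_copy reach.
case gsa: (g (Some (s, a))) => [[r b]|]; last first.
  by move: gsa; rewrite -g_apex => /perm_inj.
exists b; congr (Some (_, _)); have s_le := ltn_ord s; have r_le := ltn_ord r.
have /andP [reach_r r_s] : reachable r b && (t.+1 <= t.+1 - s + r).
  by rewrite -ball_copy -gsa in_ball (subnK (ltnW s_le)).
have s_r : t.+1 <= t.+1 - r + s.
  by rewrite -in_ball gsa ball_copy reach_r (subnK (ltnW r_le)) leqnn.
by apply: val_inj => /=; lia.
Qed.

Lemma aut_low_iso y :
  (g y \in iso_copies [set~ ord_max]) = (y \in iso_copies [set~ ord_max]).
Proof. by apply: negb_inj; rewrite -!ball_low_iso aut_ball. Qed.

Hypothesis g_fix_low_iso : {in iso_copies [set~ ord_max], forall y, g y = y}.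

Lemma aut_level (s : 'I_t.+1) a : exists b, g (Some (s, a)) = Some (s, b).
Proof.
case reach: (reachable s a); first exact: aut_keeps_level.
exists a; apply: g_fix_low_iso; rewrite !inE.
move/negbT: reach; rewrite negb_or negbK => /andP [s_t ->]; rewrite andbT.
by apply: contra s_t => /eqP ->.
Qed.

Lemma level0_aut : exists2 sg : {perm T}, is_aut e sg &
  forall a, g (Some (ord0, a)) = Some (ord0, sg a).
Proof.
pose f a := if g (Some (ord0, a)) is Some (_, b) then b else a.
have gf a : g (Some (ord0, a)) = Some (ord0, f a).
  by rewrite /f; have [b ->] := aut_level ord0 a.
have f_inj : injective f.
  by move=> a b fab; have := gf a; rewrite fab -gf => /perm_inj [].
exists (perm f_inj) => [|a]; last by rewrite permE.
apply: autP => a b; rewrite !permE.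
have := autE g_aut (Some (ord0, a)) (Some (ord0, b)).
by rewrite !gf !myc_copies /level_adj /= !andbT.
Qed.

(* If g fixes level 0 then g = 1, by induction on the level: a copy at level
   n + 1 and its image have the same neighbours at level n, so they are
   copies of twin vertices of G. *)
Lemma aut_trivial_from_level0 :
  (forall a, g (Some (ord0, a)) = Some (ord0, a)) -> g = 1%g.
Proof.
move=> g_level0.
suff g_lvl n (s : 'I_t.+1) a : s = n :> nat -> g (Some (s, a)) = Some (s, a).
  by apply/permP => [[[s a]|]]; rewrite perm1 ?g_apex //; apply: (g_lvl s).
elim: n s a => [|n IHn] s a s_n.
  by have -> : s = ord0 by apply: val_inj.
have [b gsa] := aut_level s a; rewrite gsa; congr (Some (_, _)); apply: e_tf => c.
have n_le : n <= t by have := ltn_ord s; lia.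
have := autE g_aut (Some (s, a)) (Some (lvl n, c)).
by rewrite gsa IHn ?lvlE // !myc_copies /level_adj lvlE // s_n eqxx !orbT !andbT.
Qed.

End ApexFixingAutomorphism.

Lemma low_iso_level0 :
  #|iso_copies [set~ ord_max] :\: iso_copies ([set~ ord_max] :\ ord0)| <= 1.
Proof.
apply/card_le1_eqP => [[[s1 v1]|] [[s2 v2]|]]; rewrite !inE //.
move=> /andP [n1 /andP [m1 i1]] /andP [n2 /andP [m2 i2]].
rewrite m1 i1 m2 i2 !andbT !negbK in n1 n2.
by rewrite (eqP n1) (eqP n2) (isolated_uniq e_tf i1 i2).
Qed.

(* Upper bound: a determining set S0 of G placed on level 0, together with the
   isolated copies at levels 1, ..., t - 1, determines the Mycielskian. *)
Lemma upper_bound (S0 : {set T}) : determining e S0 ->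
  (forall g : {perm V}, is_aut E g -> g apex = apex) ->
  det_num E <= #|S0| + (if has_isolated e then t - 1 else 0).
Proof.
move=> detS0 fix_apex.
set mid : {set 'I_t.+1} := [set~ ord_max] :\ ord0.
set S' : {set V} := (fun v => Some (ord0, v)) @: S0 :|: iso_copies mid.
have card_mid : #|mid| = t - 1.
  have := cardsD1 ord0 [set~ (ord_max : 'I_t.+1)]; rewrite cardsC1 card_ord !inE.
  have -> : (ord0 != ord_max :> 'I_t.+1) by rewrite -(inj_eq val_inj) /=; lia.
  by rewrite /mid /= subn1 => /(congr1 predn) ->; rewrite add1n.
apply: leq_trans (det_le (S := S') _) _; last first.
  rewrite (leq_trans (leq_card_setU _ _)) // card_imset => [|v v' [] //].
  by rewrite leq_add2l card_iso_copies card_mid.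
apply/detP => g g_aut g_S'.
have g_apex := fix_apex g g_aut.
have g_low : {in iso_copies [set~ ord_max], forall y, g y = y}.
  apply: (perm_fix_all_but_one (B := iso_copies mid)); first exact: aut_low_iso.
    exact: low_iso_level0.
  by move=> y; rewrite inE => /andP [_ y_mid]; apply: g_S'; rewrite inE y_mid orbT.
have [sg sg_aut g_level0] := level0_aut g_aut g_apex g_low.
have sg1 : sg = 1%g.
  apply: (proj1 (detP e S0) detS0 _ sg_aut) => v vS0.
  have : Some (ord0, v) \in S' by rewrite inE imset_f.
  by move/g_S'; rewrite g_level0 => -[].
by apply: aut_trivial_from_level0 g_aut g_apex g_low _ => a; rewrite g_level0 sg1 perm1.
Qed.

End Mycielskian.

Unset Implicit Arguments.

Theorem mainTheorem3 (T : finType) (e : rel T) :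
  symmetric e -> irreflexive e -> twin_free e ->
  #|T| <> 1 ->
  ~ (#|T| = 2 /\ (forall x y : T, x != y -> e x y)) ->
  forall t : nat, 0 < t ->
    det_num (myc_rel e t) =
      (if has_isolated e then det_num e + t - 1 else det_num e).
Proof.
move=> e_sym e_irr e_tf T_ne1 not_K2 t t_gt0.
have fix_apex := myc_aut_fix_apex e_sym e_irr e_tf t_gt0 T_ne1 not_K2.
have [S0 detS0 S0_min] := det_ex e.
have [S1 detS1 S1_min] := det_ex (myc_rel e t).
have := upper_bound e_sym e_tf t_gt0 detS0 fix_apex; rewrite S0_min.
have := lower_bound e_sym e_tf t_gt0 detS1; rewrite S1_min.
by case: (has_isolated e); lia.
Qed.
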